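(* Let $\Gamma$ be the K3 lattice. Then the set of exceptional Kummer points is dense in $Q_\Gamma$.
   Context: The K3 lattice is $\Gamma=2(-E_8)\oplus 3U$, where $U$ is the hyperbolic plane. $Q_\Gamma=\{[x]\in\mathbb P(\Gamma_{\mathbb C}): x^2=0,\ (x+\bar x)^2>0\}$. Each $P\in Q_\Gamma$ is identified with the oriented positive plane $P\subset\Gamma_{\mathbb R}$ spanned by the real and imaginary parts of a representative. A point $P\in Q_\Gamma$ is called exceptional Kummer if the plane $P\subset\Gamma_{\mathbb R}$ is defined over $\mathbb Q$ (i.e. $P\cap\Gamma$ has rank $2$, equivalently $P\in Q_\Gamma\cap\mathbb P(\Gamma\otimes\mathbb Q(i))$) and $x^2\equiv 0 \pmod 4$ for all $x\in P\cap\Gamma$. *)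

From mathcomp Require Import all_boot all_order all_algebra.
From mathcomp Require Import reals.
Set Implicit Arguments. Unset Strict Implicit. Unset Printing Implicit Defensive.
Import Order.TTheory GRing.Theory Num.Theory.
Local Open Scope ring_scope.

(* Cartan matrix of E8 (positive definite), nodes 0..7:
   chain 0-1-2-3-4-5-6, node 7 attached to node 2 (Bourbaki labels 1,3,4,5,6,7,8 and 2). *)
Definition e8_adj (i j : nat) : bool :=
  [|| (i.+1 == j)%N && (j <= 6)%N, (j.+1 == i)%N && (i <= 6)%N,
      (i == 2%N) && (j == 7%N) | (i == 7%N) && (j == 2%N)].

Definition e8_entry (i j : nat) : int :=
  if (i == j)%N then 2 else if e8_adj i j then -1 else 0.

(* Gram matrix of Gamma = (-E8) + (-E8) + U + U + U on Z^22, coordinates: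
   0..7 first -E8, 8..15 second -E8, (16,17),(18,19),(20,21) the three copies of U. *)
Definition k3_entry (i j : nat) : int :=
  if (i < 8)%N && (j < 8)%N then - e8_entry i j
  else if [&& (8 <= i)%N, (i < 16)%N, (8 <= j)%N & (j < 16)%N]
       then - e8_entry (i - 8)%N (j - 8)%N
  else if (16 <= i)%N && (16 <= j)%N
       then (if ((i - 16) %/ 2 == (j - 16) %/ 2)%N && (i != j)%N then 1 else 0)
  else 0.

Definition k3_gram : 'M[int]_22 := \matrix_(i < 22, j < 22) k3_entry i j.

Definition bilZ (u v : 'rV[int]_22) : int := (u *m k3_gram *m v^T) 0 0.

Section Real.
Variable R : realType.

Definition bilR (u v : 'rV[R]_22) : R :=
  (u *m map_mx (fun z : int => z%:~R) k3_gram *m v^T) 0 0.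

Definition embZ (z : 'rV[int]_22) : 'rV[R]_22 := map_mx (fun k : int => k%:~R) z.

(* A vector x in Gamma_C = C^22 is represented as x = a + i b with a b in R^22.
   C-bilinear extension: x.y = (a.c - b.d) + i (a.d + b.c). *)
Definition cbil (x y : 'rV[R]_22 * 'rV[R]_22) : R * R :=
  (bilR x.1 y.1 - bilR x.2 y.2, bilR x.1 y.2 + bilR x.2 y.1).

Definition cconj (x : 'rV[R]_22 * 'rV[R]_22) : 'rV[R]_22 * 'rV[R]_22 := (x.1, - x.2).
Definition cadd (x y : 'rV[R]_22 * 'rV[R]_22) : 'rV[R]_22 * 'rV[R]_22 :=
  (x.1 + y.1, x.2 + y.2).

(* x (a nonzero vector of Gamma_C) represents a point of Q_Gamma:
   x^2 = 0 and (x + xbar)^2 > 0 (the latter is real and forces x <> 0). *)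
Definition in_QGamma (x : 'rV[R]_22 * 'rV[R]_22) : Prop :=
  cbil x x = (0, 0) /\
  (cbil (cadd x (cconj x)) (cadd x (cconj x))).2 = 0 /\
  0 < (cbil (cadd x (cconj x)) (cadd x (cconj x))).1.

Definition in_plane (x : 'rV[R]_22 * 'rV[R]_22) (v : 'rV[R]_22) : Prop :=
  exists s t : R, v = s *: x.1 + t *: x.2.

(* P is defined over Q: P cap Gamma has rank 2 *)
Definition plane_rational (x : 'rV[R]_22 * 'rV[R]_22) : Prop :=
  exists u v : 'rV[int]_22,
    in_plane x (embZ u) /\ in_plane x (embZ v) /\
    (forall s t : R, s *: embZ u + t *: embZ v = 0 -> s = 0 /\ t = 0).

Definition exceptional_kummer (x : 'rV[R]_22 * 'rV[R]_22) : Prop :=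
  plane_rational x /\
  (forall z : 'rV[int]_22, in_plane x (embZ z) -> (4 %| bilZ z z)%Z).

End Real.

From mathcomp Require Import all_boot all_order all_algebra.
From mathcomp Require Import reals.
From mathcomp Require Import ring lra zify.
Set Implicit Arguments. Unset Strict Implicit. Unset Printing Implicit Defensive.
Import Order.TTheory GRing.Theory Num.Theory.
Local Open Scope ring_scope.

(* Write a point of Q_Gamma as x = a + i b, so that a.a = b.b > 0 and a.b = 0.
   Approximate a and b by (dl/2) u and (dl/2) v with u, v in Gamma congruent
   mod 2 to isotropic generators e, f of two different copies of U, and
   orthonormalize (Gram-Schmidt) inside the rational plane <u, v>: this gives a
   point of Q_Gamma with plane <u, v>, close to x because Gram-Schmidt is
   Lipschitz near the orthogonal pair (a, b) of equal norms.  The plane is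
   exceptional Kummer: u.u and v.v are 0 mod 4 and u.v is even, while the minor g
   of (u, v) on the coordinates of e, f is odd; any z in <u, v> /\ Gamma satisfies
   g z = S u + T v with S, T integers (Cramer), so
   g^2 z.z = S^2 u.u + 2 S T u.v + T^2 v.v = 0 mod 4, hence z.z = 0 mod 4. *)

Section MatrixForm.
Variables (T : comPzRingType) (n : nat) (G : 'M[T]_n).
Implicit Types (u v w : 'rV[T]_n) (c : T).

Definition mxform u v : T := (u *m G *m v^T) 0 0.

Lemma mxform0l v : mxform 0 v = 0.
Proof. by rewrite /mxform !mul0mx mxE. Qed.

Lemma mxform0r u : mxform u 0 = 0.
Proof. by rewrite /mxform trmx0 mulmx0 mxE. Qed.

Lemma mxformDl u v w : mxform (u + v) w = mxform u w + mxform v w.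
Proof. by rewrite /mxform !mulmxDl mxE. Qed.

Lemma mxformDr u v w : mxform u (v + w) = mxform u v + mxform u w.
Proof. by rewrite /mxform linearD mulmxDr mxE. Qed.

Lemma mxformZl c u v : mxform (c *: u) v = c * mxform u v.
Proof. by rewrite /mxform -!scalemxAl mxE. Qed.

Lemma mxformZr c u v : mxform u (c *: v) = c * mxform u v.
Proof. by rewrite /mxform linearZ /= -scalemxAr mxE. Qed.

Lemma mxformee i j : mxform (delta_mx 0 i) (delta_mx 0 j) = G i j.
Proof. by rewrite /mxform -rowE trmx_delta -colE !mxE. Qed.

Lemma mxformC : G^T = G -> forall u v, mxform u v = mxform v u.
Proof.
move=> GT u v; rewrite /mxform.
transitivity ((u *m G *m v^T)^T 0 0); first by rewrite [RHS]mxE.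
by rewrite !trmx_mul trmxK GT mulmxA.
Qed.

Lemma mxformE u v : mxform u v = \sum_j \sum_i u 0 i * G i j * v 0 j.
Proof.
rewrite /mxform mxE; apply: eq_bigr => j _.
by rewrite !mxE mulr_suml; apply: eq_bigr => i _; rewrite ?mxE.
Qed.

End MatrixForm.

Lemma mxform_norm_le (R : realDomainType) n (G : 'M[R]_n) (M X Y : R) (u v : 'rV[R]_n) :
  (forall i j, `|G i j| <= M) -> (forall k, `|u 0 k| <= X) -> (forall k, `|v 0 k| <= Y) ->
  `|mxform G u v| <= (n * n)%:R * (X * M * Y).
Proof.
move=> hG hu hv.
have -> : (n * n)%:R * (X * M * Y) = \sum_(j < n) \sum_(i < n) (X * M * Y).
  by rewrite !sumr_const card_ord -mulrnA mulr_natl.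
rewrite mxformE; apply: le_trans (ler_norm_sum _ _ _) _; apply: ler_sum => j _.
apply: le_trans (ler_norm_sum _ _ _) _; apply: ler_sum => i _.
by rewrite !normrM !ler_pM ?normr_ge0 ?mulr_ge0.
Qed.

Definition minor2 (T : ringType) n (u v : 'rV[T]_n) (i j : 'I_n) : T :=
  u 0 i * v 0 j - u 0 j * v 0 i.

Lemma minor2_map (T T' : ringType) (f : {rmorphism T -> T'}) n (u v : 'rV[T]_n) i j :
  minor2 (map_mx f u) (map_mx f v) i j = f (minor2 u v i j).
Proof. by rewrite /minor2 !mxE rmorphB !rmorphM. Qed.

Lemma minor2_scale (T : comRingType) n (u v z : 'rV[T]_n) i j (l m : T) :
  z = l *: u + m *: v -> minor2 u v i j *: z = minor2 z v i j *: u + minor2 u z i j *: v.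
Proof. by move=> ->; apply/matrixP=> a k; rewrite /minor2 !mxE; ring. Qed.

Lemma minor2_free (F : idomainType) n (u v : 'rV[F]_n) i j (l m : F) :
  minor2 u v i j != 0 -> l *: u + m *: v = 0 -> l = 0 /\ m = 0.
Proof.
move=> g0 /matrixP luv; have := luv 0 i; have := luv 0 j; rewrite !mxE => ej ei.
have lg : l * minor2 u v i j =
    v 0 j * (l * u 0 i + m * v 0 i) - v 0 i * (l * u 0 j + m * v 0 j).
  by rewrite /minor2; ring.
have mg : m * minor2 u v i j =
    u 0 i * (l * u 0 j + m * v 0 j) - u 0 j * (l * u 0 i + m * v 0 i).
  by rewrite /minor2; ring.
rewrite ei ej !mulr0 subrr in lg mg.
by split; apply: (mulIf g0); rewrite mul0r.
Qed.

Lemma sqrtr_dist_le (R : rcfType) (c d : R) :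
  0 < c -> 0 <= d -> `|Num.sqrt d - c| <= `|d - c ^+ 2| / c.
Proof.
move=> c_gt0 d_ge0; rewrite ler_pdivlMr //.
have s_ge0 := sqrtr_ge0 d.
have -> : `|d - c ^+ 2| = `|Num.sqrt d - c| * (Num.sqrt d + c).
  rewrite -[d in LHS]sqr_sqrtr // subr_sqr normrM.
  by rewrite [`|Num.sqrt d + c|]ger0_norm // addr_ge0 // ltW.
by rewrite ler_wpM2l // lerDr.
Qed.

Lemma gram_det_dist_le (R : realFieldType) (c al be ga eta : R) :
  0 <= eta -> 2 * eta <= c ->
  `|al - c| <= eta -> `|be| <= eta -> `|ga - c| <= eta ->
  `|al * ga - be ^+ 2 - c ^+ 2| <= 3 * c * eta.
Proof.
move=> eta_ge0 eta_le hal hbe hga.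
have -> : al * ga - be ^+ 2 - c ^+ 2 =
  (al - c) * (ga - c) + c * (al - c) + c * (ga - c) - be * be by ring.
have c_ge0 : 0 <= c by lra.
have t1 : `|(al - c) * (ga - c)| <= eta * eta by rewrite normrM ler_pM.
have t2 : `|c * (al - c)| <= c * eta by rewrite normrM ger0_norm // ler_wpM2l.
have t3 : `|c * (ga - c)| <= c * eta by rewrite normrM ger0_norm // ler_wpM2l.
have t4 : `|be * be| <= eta * eta by rewrite normrM ler_pM.
apply: le_trans (ler_normB _ _) _; apply: le_trans (lerD (ler_normD _ _) t4) _.
apply: le_trans (lerD (lerD (ler_normD _ _) t3) (lexx _)) _.
nra.
Qed.

Lemma gram_schmidt_coord_dist_le (R : realFieldType) (s al be A eta dl ak bk bk' : R) :
  0 < s -> `|al - s| <= 4 * eta -> `|be| <= eta ->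
  `|bk' - bk| <= dl -> `|bk'| <= 2 * A -> `|ak| <= 2 * A ->
  `|(al * bk' - be * ak) / s - bk| <= dl + 10 * A * eta / s.
Proof.
move=> s_gt0 hal hbe hb hbk' hak.
have -> : (al * bk' - be * ak) / s - bk = (bk' - bk) + ((al - s) * bk' - be * ak) / s.
  by field; rewrite gt_eqF.
apply: le_trans (ler_normD _ _) _; apply: lerD => //.
rewrite normrM normfV (gtr0_norm s_gt0) ler_pM2r ?invr_gt0 //.
apply: le_trans (ler_normB _ _) _; rewrite !normrM.
have := ler_pM (normr_ge0 _) (normr_ge0 _) hal hbk'.
have := ler_pM (normr_ge0 _) (normr_ge0 _) hbe hak.
lra.
Qed.

Lemma gram_sqrt_close (R : rcfType) (c al be ga eta : R) :
  0 < c -> 0 <= eta -> 6 * eta <= c ->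
  `|al - c| <= eta -> `|be| <= eta -> `|ga - c| <= eta ->
  let s := Num.sqrt (al * ga - be ^+ 2) in
  [/\ 0 < al, 0 < al * ga - be ^+ 2, c / 2 <= s & `|al - s| <= 4 * eta].
Proof.
move=> c_gt0 eta_ge0 eta_le hal hbe hga s.
have hdet : `|al * ga - be ^+ 2 - c ^+ 2| <= 3 * c * eta.
  by apply: gram_det_dist_le => //; lra.
have det_gt0 : 0 < al * ga - be ^+ 2.
  move: hdet; rewrite ler_norml => /andP[hdet _]; nra.
have hs : `|s - c| <= 3 * eta.
  apply: le_trans (sqrtr_dist_le c_gt0 (ltW det_gt0)) _.
  by rewrite ler_pdivrMr // mulrAC.
move: hal hs; rewrite !ler_norml => /andP[? ?] /andP[? ?].
by split=> //; [lra | lra | apply/andP; split; lra].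
Qed.

Lemma row_norm_bound (R : realDomainType) n (u v : 'rV[R]_n) :
  exists A, [/\ 1 <= A, forall k, `|u 0 k| <= A & forall k, `|v 0 k| <= A].
Proof.
have sum_le (w : 'rV[R]_n) k : `|w 0 k| <= \sum_j `|w 0 j|.
  by rewrite (bigD1 k) //= lerDl sumr_ge0.
have sum_ge0 (w : 'rV[R]_n) : 0 <= \sum_j `|w 0 j| by rewrite sumr_ge0.
exists (1 + \sum_j `|u 0 j| + \sum_j `|v 0 j|); split=> [|k|k].
- by rewrite -addrA lerDl addr_ge0.
- by have := sum_le u k; have := sum_ge0 v; lra.
- by have := sum_le v k; have := sum_ge0 u; lra.
Qed.

Lemma round_to_parity (R : realType) n (r : 'rV[R]_n) (p : 'rV[int]_n) (dl : R) :
  0 < dl -> exists U : 'rV[int]_n,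
    forall k, `|(dl / 2 *: map_mx (fun z : int => z%:~R) (p + 2 *: U)) 0 k - r 0 k| <= dl.
Proof.
move=> dl_gt0; pose N := 2 / dl.
exists (\row_k Num.floor ((N * r 0 k - (p 0 k)%:~R) / 2)) => k.
rewrite [in X in `|X - _|]mxE [map_mx _ _ 0 k]mxE.
set m := (p + 2 *: _) 0 k.
have m_near : `|m%:~R - N * r 0 k| <= 2.
  rewrite /m !mxE intrD intrM; set t := (_ / 2).
  have := floor_le t; have := floorD1_gt t; rewrite intrD ler_norml /t; lra.
have -> : dl / 2 * m%:~R - r 0 k = dl / 2 * (m%:~R - N * r 0 k).
  by rewrite /N; field; rewrite gt_eqF.
have dl2_ge0 : 0 <= dl / 2 by rewrite divr_ge0 // ltW.
rewrite normrM (ger0_norm dl2_ge0); have := ler_wpM2l dl2_ge0 m_near; lra.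
Qed.

Lemma all_iota_ord n (P : pred nat) : all P (iota 0 n) -> forall i : 'I_n, P i.
Proof. by move=> /allP PP i; apply: PP; rewrite mem_iota ltn_ord. Qed.

Lemma k3_gram_sym : k3_gram^T = k3_gram.
Proof.
have sym : all (fun i => all (fun j => k3_entry i j == k3_entry j i) (iota 0 22)) (iota 0 22).
  by vm_compute.
apply/matrixP=> i j; rewrite !mxE; apply/eqP.
exact: all_iota_ord (all_iota_ord sym j) i.
Qed.

Lemma k3_gram_norm_le i j : `|k3_gram i j| <= 2.
Proof.
have bnd : all (fun i => all (fun j => `|k3_entry i j| <= 2) (iota 0 22)) (iota 0 22).
  by vm_compute.
by rewrite mxE; exact: all_iota_ord (all_iota_ord bnd i) j.
Qed.

Lemma bilZE u v : bilZ u v = mxform k3_gram u v. Proof. by []. Qed.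

Lemma bilZC u v : bilZ u v = bilZ v u.
Proof. exact: mxformC k3_gram_sym u v. Qed.

Lemma dvdz4_odd_sqr (k z : int) : (4 %| (1 + 2 * k) ^+ 2 * z)%Z -> (4 %| z)%Z.
Proof.
move=> h; have -> : z = (1 + 2 * k) ^+ 2 * z - 4 * ((k + k ^+ 2) * z) by ring.
by rewrite rpredB // dvdz_mulr.
Qed.

Lemma dvdz4_bilZ_shift p U : (4 %| bilZ p p)%Z -> (4 %| bilZ (p + 2 *: U) (p + 2 *: U))%Z.
Proof.
move=> h; rewrite !bilZE !(mxformDl, mxformDr, mxformZl, mxformZr) -!bilZE (bilZC U p).
have -> : bilZ p p + 2 * bilZ p U + (2 * bilZ p U + 2 * (2 * bilZ U U)) =
  bilZ p p + 4 * (bilZ p U + bilZ U U) by ring.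
by rewrite rpredD // dvdz_mulr.
Qed.

Lemma dvdz2_bilZ_shift p q U V :
  (2 %| bilZ p q)%Z -> (2 %| bilZ (p + 2 *: U) (q + 2 *: V))%Z.
Proof.
move=> h; rewrite !bilZE !(mxformDl, mxformDr, mxformZl, mxformZr) -!bilZE.
have -> : bilZ p q + 2 * bilZ p V + (2 * bilZ U q + 2 * (2 * bilZ U V)) =
  bilZ p q + 2 * (bilZ p V + bilZ U q + 2 * bilZ U V) by ring.
by rewrite rpredD // dvdz_mulr.
Qed.

Lemma dvdz4_bilZ_of_comb u v z (S T k : int) :
  (1 + 2 * k) *: z = S *: u + T *: v ->
  (4 %| bilZ u u)%Z -> (4 %| bilZ v v)%Z -> (2 %| bilZ u v)%Z -> (4 %| bilZ z z)%Z.
Proof.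
move=> zE huu hvv huv; apply: (@dvdz4_odd_sqr k).
have -> : (1 + 2 * k) ^+ 2 * bilZ z z = bilZ ((1 + 2 * k) *: z) ((1 + 2 * k) *: z).
  by rewrite !bilZE mxformZl mxformZr; ring.
rewrite zE !bilZE !(mxformDl, mxformDr, mxformZl, mxformZr) -!bilZE (bilZC v u).
have -> : S * (S * bilZ u u) + S * (T * bilZ u v) + (T * (S * bilZ u v) + T * (T * bilZ v v)) =
  S ^+ 2 * bilZ u u + T ^+ 2 * bilZ v v + S * T * (2 * bilZ u v) by ring.
have h4 : (4 %| 2 * bilZ u v)%Z := dvdz_mul (dvdzz 2) huv.
by rewrite !rpredD ?(dvdz_mull _ huu) ?(dvdz_mull _ hvv) ?(dvdz_mull _ h4).
Qed.

Lemma minor2_shift_odd n (p q U V : 'rV[int]_n) i j :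
  p 0 i = 1 -> p 0 j = 0 -> q 0 i = 0 -> q 0 j = 1 ->
  exists k : int, minor2 (p + 2 *: U) (q + 2 *: V) i j = 1 + 2 * k.
Proof.
move=> pi pj qi qj; exists (U 0 i + V 0 j + 2 * (U 0 i * V 0 j - U 0 j * V 0 i)).
by rewrite /minor2 !mxE pi pj qi qj; ring.
Qed.

Section RealForm.
Variable R : realType.
Implicit Types (a b u v w : 'rV[R]_22) (x y : 'rV[R]_22 * 'rV[R]_22) (A X Y dl : R).

Local Notation G := (map_mx (fun z : int => z%:~R : R) k3_gram).

Lemma bilRE u v : bilR u v = mxform G u v. Proof. by []. Qed.

Lemma bilRC u v : bilR u v = bilR v u.
Proof.
have GT : G^T = G by rewrite map_trmx k3_gram_sym.
exact: mxformC GT u v.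
Qed.

Lemma in_QGammaP x :
  in_QGamma x <-> [/\ 0 < bilR x.1 x.1, bilR x.1 x.2 = 0 & bilR x.2 x.2 = bilR x.1 x.1].
Proof.
case: x => a b; rewrite /in_QGamma /cbil /cadd /cconj /= subrr !bilRE.
rewrite !mxform0l !mxform0r !(mxformDl, mxformDr) -!bilRE (bilRC b a) !subr0 !addr0.
split=> [[[aa_bb ab] [_ aa_gt0]] | [aa_gt0 ab bb]].
  by split; lra.
by rewrite ab bb subrr addr0; split=> //; split=> //; lra.
Qed.

Definition same_plane x y := forall w, in_plane x w <-> in_plane y w.

Lemma in_plane_trans x y w :
  in_plane y x.1 -> in_plane y x.2 -> in_plane x w -> in_plane y w.
Proof.
move=> [s1 [t1 x1E]] [s2 [t2 x2E]] [s [t ->]].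
exists (s * s1 + t * s2), (s * t1 + t * t2).
by rewrite x1E x2E; apply/matrixP=> i j; rewrite !mxE; ring.
Qed.

Lemma in_plane_fst x : in_plane x x.1.
Proof. by exists 1, 0; rewrite scale1r scale0r addr0. Qed.

Lemma in_plane_snd x : in_plane x x.2.
Proof. by exists 0, 1; rewrite scale1r scale0r add0r. Qed.

Lemma same_planeP x y :
  in_plane y x.1 -> in_plane y x.2 -> in_plane x y.1 -> in_plane x y.2 -> same_plane x y.
Proof. by move=> *; split; apply: in_plane_trans. Qed.

Lemma same_plane_trans x y z : same_plane x y -> same_plane y z -> same_plane x z.
Proof. by move=> xy yz w; split=> [/xy/yz | /yz/xy]. Qed.

Lemma same_planeZ (N : R) a b : N != 0 -> same_plane (N *: a, N *: b) (a, b).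
Proof.
move=> N0; apply: same_planeP;
  [exists N, 0 | exists 0, N | exists N^-1, 0 | exists 0, N^-1];
  by apply/matrixP=> i j; rewrite !mxE /=; field.
Qed.

Definition gram_det a b := bilR a a * bilR b b - bilR a b ^+ 2.

Definition gram_schmidt a b : 'rV[R]_22 * 'rV[R]_22 :=
  (a, (Num.sqrt (gram_det a b))^-1 *: (bilR a a *: b - bilR a b *: a)).

Lemma gram_schmidt_in_QGamma a b :
  0 < bilR a a -> 0 < gram_det a b -> in_QGamma (gram_schmidt a b).
Proof.
move=> aa_gt0 det_gt0; apply/in_QGammaP; rewrite /gram_schmidt /=.
have sqrt_det : Num.sqrt (gram_det a b) ^+ 2 = gram_det a b by rewrite sqr_sqrtr ?ltW.
have sqrt_det0 : Num.sqrt (gram_det a b) != 0 by rewrite gt_eqF ?sqrtr_gt0.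
move: sqrt_det sqrt_det0; rewrite /gram_det; set s := Num.sqrt _ => sqrt_det s0.
rewrite -scaleNr !bilRE !(mxformZl, mxformZr, mxformDl, mxformDr) -!bilRE (bilRC b a).
split=> //; first by ring.
transitivity (bilR a a * (bilR a a * bilR b b - bilR a b ^+ 2) / s ^+ 2); first by field.
by rewrite sqrt_det mulfK // -sqrt_det expf_neq0.
Qed.

Lemma same_plane_gram_schmidt a b :
  bilR a a != 0 -> 0 < gram_det a b -> same_plane (gram_schmidt a b) (a, b).
Proof.
move=> aa0 det_gt0; have s0 : Num.sqrt (gram_det a b) != 0 by rewrite gt_eqF ?sqrtr_gt0.
rewrite /gram_schmidt; set s := Num.sqrt _ in s0 *; set al := bilR a a in aa0 *.
apply: same_planeP; rewrite /=.
- exact: (in_plane_fst (a, b)).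
- exists (- (s^-1 * bilR a b)), (s^-1 * al).
  by apply/matrixP=> i j; rewrite !mxE; ring.
- exact: (in_plane_fst (a, _)).
- exists (bilR a b / al), (s / al).
  by apply/matrixP=> i j; rewrite !mxE; field; rewrite s0 aa0.
Qed.

Lemma bilR_norm_le u v X Y :
  (forall k, `|u 0 k| <= X) -> (forall k, `|v 0 k| <= Y) -> `|bilR u v| <= 968 * (X * Y).
Proof.
move=> hu hv.
have G_le i j : `|G i j| <= 2.
  by rewrite mxE -intr_norm (ler_int R _ 2) k3_gram_norm_le.
suff -> : 968 * (X * Y) = (22 * 22)%:R * (X * 2 * Y) by exact: mxform_norm_le.
by ring.
Qed.

Lemma bilR_dist_le a b a' b' A dl :
  (forall k, `|a 0 k| <= A) -> (forall k, `|b 0 k| <= A) ->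
  (forall k, `|a' 0 k - a 0 k| <= dl) -> (forall k, `|b' 0 k - b 0 k| <= dl) ->
  dl <= A -> `|bilR a' b' - bilR a b| <= 2904 * (A * dl).
Proof.
move=> ha hb ha' hb' dl_le.
have dl_ge0 : 0 <= dl := le_trans (normr_ge0 _) (ha' ord0).
have da k : `|(a' - a) 0 k| <= dl by rewrite !mxE.
have db k : `|(b' - b) 0 k| <= dl by rewrite !mxE.
have -> : bilR a' b' - bilR a b = bilR a (b' - b) + bilR (a' - a) b + bilR (a' - a) (b' - b).
  rewrite !bilRE -[in LHS](subrK a a') -[in LHS](subrK b b') !(mxformDl, mxformDr).
  by ring.
have t1 := bilR_norm_le ha db; have t2 := bilR_norm_le da hb; have t3 := bilR_norm_le da db.
apply: le_trans (ler_normD _ _) _; apply: le_trans (lerD (ler_normD _ _) (lexx _)) _.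
nra.
Qed.

Lemma gram_schmidt_lipschitz a b : in_QGamma (a, b) ->
  exists dl0 L : R, [/\ 0 < dl0, 1 <= L & forall dl a' b', dl <= dl0 ->
    (forall k, `|a' 0 k - a 0 k| <= dl) -> (forall k, `|b' 0 k - b 0 k| <= dl) ->
    [/\ 0 < bilR a' a', 0 < gram_det a' b' &
        forall k, `|(gram_schmidt a' b').2 0 k - b 0 k| <= L * dl]].
Proof.
case/in_QGammaP => /= c_gt0 ab0 bbE; set c := bilR a a in c_gt0 bbE.
have [A [A_ge1 hA hB]] := row_norm_bound a b.
pose K := 2904 * A; have K_gt0 : 0 < K by rewrite /K mulr_gt0 //; lra.
exists (Num.min 1 (c / (6 * K))), (1 + 20 * A * K / c).
split.
- by rewrite lt_min ltr01 /= divr_gt0 // mulr_gt0.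
- by rewrite lerDl divr_ge0 // ?mulr_ge0 //; lra.
move=> dl a' b'; rewrite le_min => /andP[dl_le1 dl_le] ha' hb'.
have dl_ge0 : 0 <= dl := le_trans (normr_ge0 _) (ha' ord0).
have eta_ge0 : 0 <= K * dl by rewrite mulr_ge0 // ltW.
have eta_le : 6 * (K * dl) <= c.
  by move: dl_le; rewrite ler_pdivlMr ?mulr_gt0 //; lra.
have dl_leA : dl <= A by lra.
have hal : `|bilR a' a' - c| <= K * dl by rewrite /K -mulrA; exact: bilR_dist_le.
have hbe : `|bilR a' b'| <= K * dl.
  by rewrite -[bilR a' b']subr0 -ab0 /K -mulrA; exact: bilR_dist_le.
have hga : `|bilR b' b' - c| <= K * dl by rewrite -bbE /K -mulrA; exact: bilR_dist_le.
have [al_gt0 det_gt0 s_ge hs] := gram_sqrt_close c_gt0 eta_ge0 eta_le hal hbe hga.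
split=> // k; rewrite -/(gram_det a' b') in s_ge hs.
set s := Num.sqrt (gram_det a' b') in s_ge hs *.
have s_gt0 : 0 < s by apply: lt_le_trans s_ge; rewrite divr_gt0.
have near_le (u u' : 'rV[R]_22) : (forall k, `|u 0 k| <= A) ->
    (forall k, `|u' 0 k - u 0 k| <= dl) -> `|u' 0 k| <= 2 * A.
  move=> hu hu'; rewrite -(subrK (u 0 k) (u' 0 k)).
  by apply: le_trans (ler_normD _ _) _; have := hu k; have := hu' k; lra.
rewrite !mxE mulrC.
apply: le_trans (gram_schmidt_coord_dist_le s_gt0 hs hbe (hb' k) (near_le _ _ hB hb')
  (near_le _ _ hA ha')) _.
have inv_s : s^-1 <= 2 / c by rewrite -invf_div ler_pV2 ?inE ?unitfE ?gt_eqF ?divr_gt0.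
have -> : (1 + 20 * A * K / c) * dl = dl + 10 * A * (K * dl) * (2 / c).
  by field; rewrite gt_eqF.
by rewrite lerD2l ler_wpM2l // !mulr_ge0 //; lra.
Qed.

End RealForm.

Lemma exceptional_kummer_same_plane (R : realType) x (u v : 'rV[int]_22) i j k :
  minor2 u v i j = 1 + 2 * k ->
  (4 %| bilZ u u)%Z -> (4 %| bilZ v v)%Z -> (2 %| bilZ u v)%Z ->
  same_plane x (embZ R u, embZ R v) -> exceptional_kummer x.
Proof.
move=> g_odd huu hvv huv xuv.
have g0 : minor2 (embZ R u) (embZ R v) i j != 0.
  by rewrite minor2_map g_odd intr_eq0; apply/eqP; lia.
split.
  exists u, v; split; first exact/xuv/in_plane_fst.
  by split; [exact/xuv/in_plane_snd | move=> s t; apply: minor2_free g0].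
move=> z /xuv [l [m zE]].
apply: (dvdz4_bilZ_of_comb (S := minor2 z v i j) (T := minor2 u z i j) _ huu hvv huv).
have E : embZ R ((1 + 2 * k) *: z) = embZ R (minor2 z v i j *: u + minor2 u z i j *: v).
  by rewrite /embZ map_mxD !map_mxZ -g_odd -!minor2_map; exact: minor2_scale zE.
apply/matrixP=> a c; move/matrixP/(_ a c): E; rewrite /embZ mxE [in RHS]mxE.
exact: intr_inj.
Qed.

(* [delta_mx 0 isoU1] and [delta_mx 0 isoU2] are isotropic generators of the
   first two copies of U in Gamma. *)
Definition isoU1 : 'I_22 := @Ordinal 22 16 isT.
Definition isoU2 : 'I_22 := @Ordinal 22 18 isT.

Lemma k3_exceptional_kummer (R : realType) x (U V : 'rV[int]_22) :
  same_plane x (embZ R (delta_mx 0 isoU1 + 2 *: U), embZ R (delta_mx 0 isoU2 + 2 *: V)) ->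
  exceptional_kummer x.
Proof.
have [k hk] : exists k,
    minor2 (delta_mx 0 isoU1 + 2 *: U) (delta_mx 0 isoU2 + 2 *: V) isoU1 isoU2 = 1 + 2 * k.
  by apply: minor2_shift_odd; rewrite mxE.
apply: exceptional_kummer_same_plane hk _ _ _.
- by apply: dvdz4_bilZ_shift; rewrite bilZE mxformee mxE.
- by apply: dvdz4_bilZ_shift; rewrite bilZE mxformee mxE.
- by apply: dvdz2_bilZ_shift; rewrite bilZE mxformee mxE.
Qed.

Theorem mainTheorem8 (R : realType) (x : 'rV[R]_22 * 'rV[R]_22) (e : R) :
  in_QGamma x -> 0 < e ->
  exists y : 'rV[R]_22 * 'rV[R]_22,
    in_QGamma y /\ exceptional_kummer y /\
    (forall i : 'I_22, `|x.1 0 i - y.1 0 i| < e /\ `|x.2 0 i - y.2 0 i| < e).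
Proof.
case: x => a b hx e_gt0.
have [dl0 [L [dl0_gt0 L_ge1 gs_near]]] := gram_schmidt_lipschitz hx.
pose dl := Num.min dl0 (e / (2 * L)).
have L_gt0 : 0 < L by lra.
have dl_gt0 : 0 < dl by rewrite lt_min dl0_gt0 /= divr_gt0 // mulr_gt0.
have Ldl_lt : L * dl < e.
  have : L * dl <= L * (e / (2 * L)) by rewrite ler_wpM2l ?ge_min ?lexx ?orbT //; lra.
  have -> : L * (e / (2 * L)) = e / 2 by field; rewrite gt_eqF.
  lra.
have [U hU] := round_to_parity a (delta_mx 0 isoU1) dl_gt0.
have [V hV] := round_to_parity b (delta_mx 0 isoU2) dl_gt0.
set a' := _ *: _ in hU; set b' := _ *: _ in hV.
have dl_le : dl <= dl0 by rewrite ge_min lexx.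
have [aa_gt0 det_gt0 hb'] := gs_near dl a' b' dl_le hU hV.
exists (gram_schmidt a' b'); split; first exact: gram_schmidt_in_QGamma.
split.
  apply: (@k3_exceptional_kummer R _ U V).
  apply: same_plane_trans (same_plane_gram_schmidt (lt0r_neq0 aa_gt0) det_gt0) _.
  by apply: same_planeZ; rewrite gt_eqF // divr_gt0.
have dl_lt : dl < e by apply: le_lt_trans Ldl_lt; rewrite ler_peMl // ltW.
move=> k; split; rewrite distrC.
  exact: le_lt_trans (hU k) dl_lt.
exact: le_lt_trans (hb' k) Ldl_lt.
Qed.
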